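(* Let $m,n$ be positive integers and $\mathbf a,\mathbf b\in\mathbb Z^{m+n-2}$. If $\mathbf a\succeq\mathbf b$, then $p_{A^{m,n}}(\mathbf a)\ge p_{A^{m,n}}(\mathbf b)$.
   Context: $\mathbf u\succeq\mathbf v$ means $u_i\ge v_i$ for every coordinate $i$. Vector partition function: for a $d\times r$ integer matrix $A$ with $\ker A\cap\mathbb R^r_{\ge0}=\{0\}$, $p_A(\mathbf b)=\#\{\mathbf x\in\mathbb Z^r_{\ge0}:A\mathbf x=\mathbf b\}$. Variables $s_0,\dots,s_{m-1},t_1,\dots,t_{n-2}$; $T=t_1\cdots t_{n-2}$; $x_i=s_1\cdots s_iT^i$ ($1\le i\le m-1$), $y_j=s_0s_1\cdots s_{m-1}T^{m-1}t_1\cdots t_{j-1}$ ($1\le j\le n-1$); $e(M)\in\mathbb Z^{m+n-2}$ is the exponent vector of a Laurent monomial $M$ (coordinates $s_0,\dots,s_{m-1},t_1,\dots,t_{n-2}$). $A^{m,n}$ is the $(m+n-2)\times(\binom{mn}2-\binom m2-\binom n2)$ matrix whose columns are the exponent vectors of the following monomials, with multiplicity: $y_j/x_i$ and $x_iy_j$; $x_i$ ($n-1$ times each); $y_j$ ($m-1$ times each); $x_iy_j/x_k$ ($i\ne k$); $x_iy_j/y_k$ ($j\ne k$); $x_ky_l/(x_iy_j)$ ($i<k$, $j\ne l$); $x_k/x_i$ ($i<k$, $n-1$ times each); $y_l/y_j$ ($j<l$, $m-1$ times each); here $i,k\in\{1,\dots,m-1\}$ and $j,l\in\{1,\dots,n-1\}$.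 *)

From HB Require Import structures.
From mathcomp Require Import all_boot all_order all_algebra.
From mathcomp Require Import finmap boolp classical_sets cardinality.
Set Implicit Arguments. Unset Strict Implicit. Unset Printing Implicit Defensive.
Import Order.TTheory GRing.Theory Num.Theory.
Local Open Scope ring_scope.

(* The count is the
   cardinality of the (finite, under the paper's standing hypothesis
   ker A ∩ R^r_{>=0} = 0) solution set; fset_set returns the empty set
   for infinite sets, so the value is only meaningful under that hypothesis. *)
Definition vpf (d r : nat) (A : 'M[int]_(d, r)) (b : 'cV[int]_d) : nat :=
  #|` fset_set [set x : 'cV[nat]_r | A *m map_mx (fun k : nat => k%:Z) x = b] |%fset.

(* Coordinates of Z^{m+n-2}, indexed by k : nat:
   k < m          <-> s_k      (k = 0, ..., m-1)
   m <= k         <-> t_{k-m+1} (k = m, ..., m+n-3). *)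

(* exponent vector of x_i = s_1 ... s_i T^i, T = t_1 ... t_{n-2} *)
Definition ex (m i : nat) (k : nat) : int :=
  if (k < m)%N then ((0 < k)%N && (k <= i)%N)%:R else i%:Z.

(* exponent vector of y_j = s_0 ... s_{m-1} T^{m-1} t_1 ... t_{j-1} *)
Definition ey (m j : nat) (k : nat) : int :=
  if (k < m)%N then 1 else (m.-1)%:Z + ((k.+2 <= j + m)%N)%:R.

Definition vadd (u v : nat -> int) : nat -> int := fun k => u k + v k.
Definition vsub (u v : nat -> int) : nat -> int := fun k => u k - v k.

(* The columns of A^{m,n} (as exponent vectors), with multiplicity.
   i, k range over {1, ..., m-1};  j, l range over {1, ..., n-1}. *)
Definition Acols (m n : nat) : seq (nat -> int) :=
  let I := iota 1 m.-1 in
  let J := iota 1 n.-1 in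
  [seq vsub (ey m j) (ex m i) | i <- I, j <- J] ++
  [seq vadd (ex m i) (ey m j) | i <- I, j <- J] ++
  flatten [seq nseq n.-1 (ex m i) | i <- I] ++
  flatten [seq nseq m.-1 (ey m j) | j <- J] ++
  flatten [seq [seq vsub (vadd (ex m i) (ey m j)) (ex m k) | k <- I & k != i]
             | i <- I, j <- J] ++
  flatten [seq [seq vsub (vadd (ex m i) (ey m j)) (ey m k) | k <- J & k != j]
             | i <- I, j <- J] ++
  flatten (flatten
    [seq [seq [seq vsub (vadd (ex m k) (ey m l)) (vadd (ex m i) (ey m j))
               | l <- J & l != j] | k <- I & (i < k)%N]
    | i <- I, j <- J]) ++
  flatten (flatten [seq [seq nseq n.-1 (vsub (ex m k) (ex m i)) | k <- I & (i < k)%N]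
                   | i <- I]) ++
  flatten (flatten [seq [seq nseq m.-1 (vsub (ey m l) (ey m j)) | l <- J & (j < l)%N]
                   | j <- J]).

Definition Amn (m n : nat) : 'M[int]_(m + n - 2, size (Acols m n)) :=
  \matrix_(k < m + n - 2, c < size (Acols m n))
     (nth (fun _ => 0) (Acols m n) c) k.

From HB Require Import structures.
From mathcomp Require Import all_boot all_order all_algebra.
From mathcomp Require Import finmap boolp classical_sets cardinality.
From mathcomp Require Import zify.
Set Implicit Arguments. Unset Strict Implicit. Unset Printing Implicit Defensive.
Import Order.TTheory GRing.Theory Num.Theory.
Local Open Scope ring_scope.

(* Two facts about A = A^{m,n} make p_A monotone.  First, the grading giving
   s_0 and every t_l degree 1 and s_1, ..., s_{m-1} degree 2 assigns x_i the
   degree n i and y_j the degree n (m-1) + j, and under it every column of A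
   has positive degree; so the degree of b bounds every coordinate of a
   solution of A x = b and the solution sets are finite.  Second, every unit
   vector e_k is a column of A.  Writing a - b >= 0 as a nonnegative
   combination y of these unit columns, x |-> x + y injects the solutions
   for b into the solutions for a. *)

Local Notation intmx x := (map_mx (fun k : nat => k%:Z) x).

Lemma intmxD p q (x y : 'M[nat]_(p, q)) : intmx (x + y) = intmx x + intmx y.
Proof. by apply/matrixP => i j; rewrite !mxE. Qed.

Section MonotonePartitionFunction.
Variables (d r : nat) (A : 'M[int]_(d, r)).

Lemma solution_entry_le (w : 'rV[int]_d) (x : 'cV[nat]_r) c :
  (forall c, 0 < (w *m A) 0 c) -> (x c 0)%:Z <= (w *m (A *m intmx x)) 0 0.
Proof.
move=> wA_gt0; rewrite mulmxA mxE (bigD1 c) //= [intmx x c 0]mxE.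
rewrite -[X in X <= _]addr0 lerD //.
  by rewrite mulrC ler_peMr // -gtz0_ge1.
by apply: sumr_ge0 => c' _; rewrite mulr_ge0 ?(ltW (wA_gt0 c')) // mxE.
Qed.

Lemma solutions_finite (w : 'rV[int]_d) b : (forall c, 0 < (w *m A) 0 c) ->
  finite_set [set x : 'cV[nat]_r | A *m intmx x = b].
Proof.
move=> wA_gt0; set B := absz ((w *m b) 0 0).
apply: (@sub_finite_set _ _ [set map_mx val y | y in [set: 'cV['I_B.+1]_r]]).
  move=> x /= Ax; exists (map_mx inord x) => //.
  apply/matrixP => i j; rewrite !mxE inordK // (ord1 j) ltnS.
  by have := solution_entry_le x i wA_gt0; rewrite Ax /B; lia.
exact/finite_image/finite_finset.
Qed.

Lemma unit_columns_span : (forall k : 'I_d, exists c, col c A = delta_mx k 0) ->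
  forall v : 'cV[nat]_d, exists y : 'cV[nat]_r, A *m intmx y = intmx v.
Proof.
move=> /fin_all_exists[f Af] v.
exists (\col_c \sum_(k | f k == c) v k ord0)%N; apply/matrixP => i j.
have Aif k : A i (f k) = (i == k)%:R.
  by have /matrixP/(_ i 0) := Af k; rewrite !mxE eqxx andbT.
rewrite (ord1 j) !mxE.
transitivity (\sum_k A i (f k) * (v k 0)%:Z).
  rewrite [RHS](partition_big f xpredT) //=; apply: eq_bigr => c _.
  rewrite !mxE -natz natr_sum big_distrr /=.
  by apply: eq_big => // k /eqP <-; rewrite natz.
rewrite (bigD1 i) //= big1 => [|k ki]; first by rewrite Aif eqxx mul1r addr0.
by rewrite Aif eq_sym (negbTE ki) mul0r.
Qed.

Lemma vpf_monotone (w : 'rV[int]_d) (a b : 'cV[int]_d) :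
    (forall c, 0 < (w *m A) 0 c) ->
    (forall k : 'I_d, exists c, col c A = delta_mx k 0) ->
    (forall i, b i 0 <= a i 0) ->
  (vpf A b <= vpf A a)%N.
Proof.
move=> wA_gt0 unitA ba.
have [y Ay] := unit_columns_span unitA (map_mx absz (a - b)).
have {}Ay : A *m intmx y = a - b.
  by rewrite Ay; apply/matrixP => i j; rewrite !mxE (ord1 j) gez0_abs // subr_ge0.
pose Sol c := [set x : 'cV[nat]_r | A *m intmx x = c]%classic.
have shift_inj : injective (fun x : 'cV[nat]_r => x + y).
  move=> x x' /matrixP xx'; apply/matrixP => i j.
  by have := xx' i j; rewrite !mxE; apply: addIn.
have shift_sol : ([set x + y | x in Sol b] `<=` Sol a)%classic.
  by move=> _ [x Ax <-]; rewrite /Sol /= in Ax *; rewrite intmxD mulmxDr Ax Ay addrC subrK.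
have finSol c : finite_set (Sol c) := solutions_finite c wA_gt0.
rewrite /vpf -/(Sol a) -/(Sol b).
have -> : #|` fset_set (Sol b)|%fset
          = #|` fset_set [set (x + y)%R | x in Sol b]%classic|%fset.
  by rewrite fset_set_image // card_imfset.
by apply/fsubset_leq_card; rewrite -fset_set_sub //; apply/finite_image.
Qed.

End MonotonePartitionFunction.

Definition weight (m k : nat) : int := if (0 < k < m)%N then 2 else 1.

Definition wdeg (m n : nat) (v : nat -> int) : int :=
  \sum_(0 <= k < m + n - 2) weight m k * v k.

Lemma wdeg_vadd m n u v : wdeg m n (vadd u v) = wdeg m n u + wdeg m n v.
Proof. by rewrite /wdeg -big_split; apply: eq_bigr => k _; rewrite mulrDr. Qed.

Lemma wdeg_vsub m n u v : wdeg m n (vsub u v) = wdeg m n u - wdeg m n v.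
Proof. by rewrite /wdeg -sumrB; apply: eq_bigr => k _; rewrite mulrBr. Qed.

Lemma sumr_indicator_lt (a b c : nat) : (a <= c <= b)%N ->
  \sum_(a <= k < b) ((k < c)%N)%:R = (c - a)%:R :> int.
Proof.
case/andP=> ac cb; rewrite (big_cat_nat ac cb) /=.
rewrite [X in X + _](eq_big_nat _ _ (F2 := fun => 1)); last by move=> k /andP[_ ->].
rewrite [X in _ + X]big1_seq ?addr0 ?sumr_const_nat //.
by move=> k /andP[_]; rewrite mem_index_iota => /andP[ck _]; rewrite ltnNge ck.
Qed.

Lemma wdeg_split m n v : (1 <= m)%N -> (2 <= n)%N ->
  wdeg m n v = v 0%N + 2 * \sum_(1 <= k < m) v k + \sum_(m <= k < m + n - 2) v k.
Proof.
move=> m1 n2; rewrite /wdeg (big_cat_nat _ (n := m)) //=; last by lia.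
rewrite big_ltn // /weight /= mul1r big_distrr /=; congr (_ + _ + _).
  by apply: eq_big_nat => k /andP[k1 km]; rewrite k1 km.
by apply: eq_big_nat => k /andP[mk _]; rewrite (leq_gtF mk) andbF mul1r.
Qed.

Lemma wdeg_ex m n i : (2 <= n)%N -> (1 <= i < m)%N -> wdeg m n (ex m i) = (n * i)%:Z.
Proof.
move=> n2 /andP[i1 im]; rewrite wdeg_split //; last by lia.
rewrite {1}/ex (ltn_trans i1 im) /=.
rewrite (eq_big_nat _ _ (F2 := fun k => ((k < i.+1)%N)%:R)); last first.
  by move=> k /andP[k1 km]; rewrite /ex km k1.
rewrite sumr_indicator_lt; last by lia.
rewrite (eq_big_nat _ _ (m := m) (F2 := fun => i%:Z)); last first.
  by move=> k /andP[mk _]; rewrite /ex (leq_gtF mk).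
rewrite sumr_const_nat; nia.
Qed.

Lemma wdeg_ey m n j : (2 <= m)%N -> (2 <= n)%N -> (1 <= j < n)%N ->
  wdeg m n (ey m j) = (n * m.-1 + j)%:Z.
Proof.
move=> m2 n2 /andP[j1 jn]; rewrite wdeg_split //; last by lia.
rewrite {1}/ey (ltnW m2).
rewrite (eq_big_nat _ _ (F2 := fun => 1)); last by move=> k /andP[_ km]; rewrite /ey km.
rewrite (eq_big_nat _ _ (m := m)
          (F2 := fun k => (m.-1)%:Z + ((k < (j + m).-1)%N)%:R)); last first.
  by move=> k /andP[mk _]; rewrite /ey (leq_gtF mk) /=; congr (_ + (nat_of_bool _)%:R); lia.
rewrite big_split /= sumr_indicator_lt; last by lia.
rewrite !sumr_const_nat; nia.
Qed.

Lemma all_flatten (T : Type) (P : pred T) (ss : seq (seq T)) :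
  all P (flatten ss) = all (all P) ss.
Proof. by elim: ss => //= s ss IH; rewrite all_cat IH. Qed.

Lemma has_flatten (T : Type) (P : pred T) (ss : seq (seq T)) :
  has P (flatten ss) = has (has P) ss.
Proof. by elim: ss => //= s ss IH; rewrite has_cat IH. Qed.

Lemma Acols_wdeg_gt0 m n : (2 <= m)%N -> (2 <= n)%N ->
  all (fun v => 0 < wdeg m n v) (Acols m n).
Proof.
move=> m2 n2.
have I_P i : i \in iota 1 m.-1 -> (1 <= i < m)%N by rewrite mem_iota; lia.
have J_P j : j \in iota 1 n.-1 -> (1 <= j < n)%N by rewrite mem_iota; lia.
have mem_filterP (T : eqType) (P : pred T) a s : a \in [seq x <- s | P x] -> P a /\ a \in s.
  by rewrite mem_filter => /andP.
rewrite /Acols !all_cat; apply/and5P; split; last (apply/and5P; split).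
- apply/all_allpairsP => i j /I_P ? /J_P ? /=.
  rewrite wdeg_vsub wdeg_ex // wdeg_ey //; nia.
- apply/all_allpairsP => i j /I_P ? /J_P ? /=.
  rewrite wdeg_vadd wdeg_ex // wdeg_ey //; nia.
- rewrite all_flatten all_map; apply/allP => i /I_P ? /=.
  rewrite all_nseq wdeg_ex //; apply/orP; right; nia.
- rewrite all_flatten all_map; apply/allP => j /J_P ? /=.
  rewrite all_nseq wdeg_ey //; apply/orP; right; nia.
- rewrite all_flatten; apply/all_allpairsP => i j /I_P ? /J_P ? /=; rewrite all_map.
  apply/allP => k /mem_filterP[_ /I_P ?] /=.
  rewrite wdeg_vsub wdeg_vadd !wdeg_ex // wdeg_ey //; nia.
- rewrite all_flatten; apply/all_allpairsP => i j /I_P ? /J_P ? /=; rewrite all_map.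
  apply/allP => l /mem_filterP[/eqP ? /J_P ?] /=.
  rewrite wdeg_vsub wdeg_vadd wdeg_ex // !wdeg_ey //; nia.
- rewrite 2!all_flatten; apply/all_allpairsP => i j /I_P ? /J_P ? /=; rewrite all_map.
  apply/allP => k /mem_filterP[? /I_P ?] /=; rewrite all_map.
  apply/allP => l /mem_filterP[/eqP ? /J_P ?] /=.
  rewrite wdeg_vsub !wdeg_vadd !wdeg_ex // !wdeg_ey //; nia.
- rewrite 2!all_flatten all_map; apply/allP => i /I_P ? /=; rewrite all_map.
  apply/allP => k /mem_filterP[? /I_P ?] /=.
  rewrite all_nseq wdeg_vsub !wdeg_ex //; apply/orP; right; nia.
- rewrite 2!all_flatten all_map; apply/allP => j /J_P ? /=; rewrite all_map.
  apply/allP => l /mem_filterP[? /J_P ?] /=.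
  rewrite all_nseq wdeg_vsub !wdeg_ey //; apply/orP; right; nia.
Qed.

Definition is_unit_vector (d k : nat) (v : nat -> int) : bool :=
  all (fun l => v l == (l == k)%:R) (iota 0 d).

Lemma is_unit_vectorP d k v :
  reflect (forall l, (l < d)%N -> v l = (l == k)%:R) (is_unit_vector d k v).
Proof.
apply: (iffP allP) => [vE l ld | vE l]; first by apply/eqP/vE; rewrite mem_iota.
by rewrite mem_iota => /andP[_ ld]; rewrite vE.
Qed.

Ltac exists_index x :=
  apply/hasP; exists x; [rewrite ?mem_filter mem_iota; lia | rewrite /= ?has_map].

Ltac check_unit_vector :=
  apply/is_unit_vectorP => l ?; unfold vsub, vadd, ex, ey; repeat case: ifP => ?; lia.

Lemma has_unit_Acols m n k : (2 <= m)%N -> (2 <= n)%N -> (k < m + n - 2)%N ->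
  has (is_unit_vector (m + n - 2) k) (Acols m n).
Proof.
(* e(s_0) = y_1/x_{m-1} and e(t_l) = y_{l+1}/y_l; for 0 < k < m, e(s_k) is
   x_1 resp. x_k/x_{k-1} when n = 2 (so that T = 1), and x_1 y_1/y_{n-1}
   resp. x_k y_1/(x_{k-1} y_{n-1}) when n > 2. *)
move=> m2 n2 kd; rewrite /Acols !has_cat.
have [->|k_gt0] := posnP k.
  apply/orP; left; rewrite has_flatten has_map.
  exists_index m.-1; exists_index 1%N.
  check_unit_vector.
have [km|mk] := ltnP k m; last first.
  do 8 (apply/orP; right); rewrite 2!has_flatten has_map.
  exists_index (k - m).+1; exists_index (k - m).+2; rewrite has_nseq.
  apply/andP; split; first lia.
  check_unit_vector.
have [n_eq2|n_gt2] := eqVneq n 2%N.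
  have [k_eq1|k_gt1] := eqVneq k 1%N.
    do 2 (apply/orP; right); apply/orP; left; rewrite has_flatten has_map.
    exists_index 1%N; rewrite has_nseq; apply/andP; split; first lia.
    check_unit_vector.
  do 7 (apply/orP; right); apply/orP; left; rewrite 2!has_flatten has_map.
  exists_index k.-1; exists_index k; rewrite has_nseq; apply/andP; split; first lia.
  check_unit_vector.
have [k_eq1|k_gt1] := eqVneq k 1%N.
  do 5 (apply/orP; right); apply/orP; left; rewrite 2!has_flatten has_map.
  exists_index 1%N; exists_index 1%N; exists_index n.-1.
  check_unit_vector.
do 6 (apply/orP; right); apply/orP; left; rewrite 3!has_flatten has_map.
exists_index k.-1; exists_index n.-1; exists_index k; exists_index 1%N.
check_unit_vector.
Qed.

Lemma Amn_weight_gt0 m n : (2 <= m)%N -> (2 <= n)%N ->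
  forall c, 0 < ((\row_k weight m k) *m Amn m n) 0 c.
Proof.
move=> m2 n2 c.
have -> : ((\row_k weight m k) *m Amn m n) 0 c = wdeg m n (nth (fun=> 0) (Acols m n) c).
  by rewrite mxE /wdeg big_mkord; apply: eq_bigr => k _; rewrite !mxE.
by have /(all_nthP (fun=> 0)) := Acols_wdeg_gt0 m2 n2; apply.
Qed.

Lemma Amn_unit_column m n : (2 <= m)%N -> (2 <= n)%N ->
  forall k : 'I_(m + n - 2), exists c, col c (Amn m n) = delta_mx k 0.
Proof.
move=> m2 n2 k.
have /(has_nthP (fun=> 0))[c cA /is_unit_vectorP unit_c] :=
  has_unit_Acols m2 n2 (ltn_ord k).
by exists (Ordinal cA); apply/matrixP => i j; rewrite !mxE (ord1 j) unit_c ?eqxx ?andbT.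
Qed.

Theorem mainTheorem12 (m n : nat) (hm : (2 <= m)%N) (hn : (2 <= n)%N)
    (a b : 'cV[int]_(m + n - 2)) :
  (forall i : 'I_(m + n - 2), b i 0 <= a i 0) ->
  (vpf (Amn m n) b <= vpf (Amn m n) a)%N.
Proof.
apply: (vpf_monotone (w := \row_k weight m k)).
  exact: Amn_weight_gt0.
exact: Amn_unit_column.
Qed.
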